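(* Let $R$, $G$, $*$, $\sigma$ and $\mathcal{S}$ be as in the context, and suppose $\mathcal{S}$ is anticommutative. Then: - for all $x,y\in G$, we have $xy=yx$ if and only if $x^*y=yx^*$; - if moreover $x,y\in G\setminus G_*$ and $xy=yx$, then $xy=yx=x^*y^*=y^*x^*$ and $xy^*=y^*x=x^*y=yx^*$, and $2(1+\sigma(xy))=0=2(\sigma(x)+\sigma(y))$ in $R$.
   Context: Throughout, $R$ is a commutative ring with unity with $\operatorname{char}(R)\neq 2$, and $\mathcal{U}(R)$ is its unit group. $G$ is a group with an involution $*$, i.e. a map $x\mapsto x^*$ with $(xy)^*=y^*x^*$ and $(x^* )^*=x$. The map $\sigma:G\to\mathcal{U}(R)$ is a nontrivial group homomorphism with kernel $N=\ker\sigma$, and it is compatible with $*$: $xx^*\in N$ for all $x\in G$. The group ring $RG$ carries the involution $\left(\sum_{x\in G}\alpha_x x\right)^{\sigma*}=\sum_{x\in G}\sigma(x)\alpha_x x^*$. Write $G_*=\{x\in G: x^*=x\}$ and $N_*=G_*\cap N$. Let $\mathcal{S}$ be the $R$-submodule of $RG$ spanned by the union of the following three sets: - $2\mathcal{S}_1=\{2x: x\in N_*\}$; - $\mathcal{S}_2=\{\alpha x: x\in G_*\setminus N,\ \alpha\in R,\ \alpha(1-\sigma(x))=0\}$; - $\mathcal{S}_3=\{x+\sigma(x)x^*: x\in G\setminus G_*\}$. $\mathcal{S}$ is called anticommutative if $ab+ba=0$ for all $a,b\in\mathcal{S}$. *)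

From HB Require Import structures.
From mathcomp Require Import all_boot all_order all_algebra.
Set Implicit Arguments. Unset Strict Implicit. Unset Printing Implicit Defensive.
Import Order.TTheory GRing.Theory Num.Theory.
Local Open Scope ring_scope.

(* Elements of the group ring RG are
   represented by finite formal sums  [:: (a1, x1); ...; (an, xn)]
   meaning  a1 x1 + ... + an xn ; two representatives denote the same
   element of RG iff they have the same coefficient at every g in G. *)

Section GroupRing.
Variables (R : comNzRingType) (G : groupType).

Definition rg := seq (R * G).

Definition rg_coef (a : rg) (g : G) : R := \sum_(p <- a | p.2 == g) p.1.

Definition rg_eq (a b : rg) : Prop := forall g, rg_coef a g = rg_coef b g.

Definition rg_add (a b : rg) : rg := a ++ b.
Definition rg_scale (r : R) (a : rg) : rg := [seq (r * p.1, p.2) | p <- a].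
Definition rg_mul (a b : rg) : rg :=
  [seq (p.1 * q.1, (p.2 * q.2)%g) | p <- a, q <- b].

Variables (star : G -> G) (sigma : G -> R).

Definition Gstar (x : G) : Prop := star x = x.
Definition inN (x : G) : Prop := sigma x = 1.

Definition S_gen (a : rg) : Prop :=
  (exists x, Gstar x /\ inN x /\ a = [:: (2%:R, x)])
  \/ (exists x (al : R), Gstar x /\ ~ inN x /\ al * (1 - sigma x) = 0
                         /\ a = [:: (al, x)])
  \/ (exists x, ~ Gstar x /\ a = [:: (1, x); (sigma x, star x)]).

Inductive S_comb : rg -> Prop :=
  | S_comb0 : S_comb [::]
  | S_combS r a b : S_gen a -> S_comb b -> S_comb (rg_add (rg_scale r a) b).

Definition inS (a : rg) : Prop := exists b, S_comb b /\ rg_eq a b.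

Definition S_anticomm : Prop :=
  forall a b, inS a -> inS b -> rg_eq (rg_add (rg_mul a b) (rg_mul b a)) [::].

End GroupRing.

From HB Require Import structures.
From mathcomp Require Import all_boot all_order all_algebra.
From mathcomp Require Import ring.
Import GRing.Theory.
Set Implicit Arguments. Unset Strict Implicit.
Local Open Scope ring_scope.

(* For x outside G_*, the element x + sigma(x) x^* lies in S_3, so for
   nonsymmetric x and y the anticommutator of these two elements vanishes.
   It has at most eight support points x y, x y^*, ..., y^* x^*, and reading
   off its coefficient at a well-chosen point forces coincidences among them:
   otherwise the coefficient would be 2 or 2 sigma(x), which is nonzero because
   char R <> 2 and sigma(x) is a unit.  With x = y this shows that x is normal
   and that x^* x^* = x x; for commuting x and y it shows x^* y^* = x y, and
   the remaining identities follow by cancellation in G. *)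

Lemma rg_coef_cons (R : comNzRingType) (G : groupType) (a : R) (x : G)
    (l : rg R G) (g : G) :
  rg_coef ((a, x) :: l) g = (if x == g then a else 0) + rg_coef l g.
Proof. by rewrite /rg_coef big_cons /=; case: eqP; rewrite ?add0r. Qed.

Section Anticommutative.
Variables (R : comNzRingType) (G : groupType) (star : G -> G) (sigma : G -> R).
Hypothesis hchar : 2%:R != 0 :> R.
Hypothesis hstarM : forall x y : G, star (x * y)%g = (star y * star x)%g.
Hypothesis hstarK : forall x : G, star (star x) = x.
Hypothesis hsigmaM : forall x y : G, sigma (x * y)%g = sigma x * sigma y.
Hypothesis hsigmaU : forall x : G, exists u : R, sigma x * u = 1.
Hypothesis hS : S_anticomm star sigma.

Local Notation "x ^*" := (star x) (format "x ^*").

Definition symm (x : G) : rg R G := [:: (1, x); (sigma x, x^*)].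

Lemma symm_inS x : ~ Gstar star x -> inS star sigma (symm x).
Proof.
move=> hx; exists (rg_add (rg_scale 1 (symm x)) [::]); split.
  by apply: S_combS; [right; right; exists x | exact: S_comb0].
by move=> g; rewrite /rg_add /rg_scale /= !mul1r.
Qed.

Lemma symm_anticomm_coef x y g : ~ Gstar star x -> ~ Gstar star y ->
  (if (x * y)%g == g then 1 else 0) + (if (x * y^*)%g == g then sigma y else 0)
  + (if (x^* * y)%g == g then sigma x else 0)
  + (if (x^* * y^*)%g == g then sigma x * sigma y else 0)
  + (if (y * x)%g == g then 1 else 0) + (if (y * x^*)%g == g then sigma x else 0)
  + (if (y^* * x)%g == g then sigma y else 0)
  + (if (y^* * x^*)%g == g then sigma y * sigma x else 0) = 0.
Proof.
move=> hx hy; have := hS (symm_inS hx) (symm_inS hy) g.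
by rewrite /rg_add /rg_mul /= !rg_coef_cons /rg_coef big_nil !mul1r !mulr1 !addrA addr0.
Qed.

Lemma double_sigma_neq0 x : 2%:R * sigma x != 0.
Proof.
have [u hu] := hsigmaU x; apply: contraNneq hchar => h2.
have : 2%:R * sigma x * u = 2%:R by rewrite -mulrA hu mulr1.
by rewrite h2 mul0r => <-.
Qed.

Lemma nonsym_eqF x : ~ Gstar star x -> (x^* == x) = false.
Proof. by move/eqP/negbTE. Qed.

Lemma mul_starC x : ~ Gstar star x -> (x^* * x = x * x^*)%g.
Proof.
move=> hx; have nx := nonsym_eqF hx.
apply/eqP; apply: contraNT (double_sigma_neq0 x) => hne.
have := symm_anticomm_coef (x * x^*)%g hx hx.
rewrite !(inj_eq (mulgI _)) !(inj_eq (mulIg _)) eqxx eq_sym nx (negbTE hne).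
by move=> H; apply/eqP; rewrite -[RHS]H; ring.
Qed.

Lemma star_sqr x : ~ Gstar star x -> (x^* * x^* = x * x)%g.
Proof.
move=> hx; have nx := nonsym_eqF hx.
apply/eqP; apply: contraNT hchar => hne.
have := symm_anticomm_coef (x * x)%g hx hx.
rewrite !(inj_eq (mulgI _)) !(inj_eq (mulIg _)) eqxx nx (negbTE hne).
by move=> H; apply/eqP; rewrite -[RHS]H; ring.
Qed.

Section Commuting.
Variables x y : G.
Hypotheses (hx : ~ Gstar star x) (hy : ~ Gstar star y) (Exy : (x * y = y * x)%g).

Lemma commute_coef_mul :
  2%:R + (if (x^* * y^* == x * y)%g then 2%:R * sigma (x * y)%g else 0) = 0.
Proof.
have [nx ny] := (nonsym_eqF hx, nonsym_eqF hy).
have E1 : (y^* * x^* = x^* * y^*)%g by rewrite -!hstarM Exy.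
have := symm_anticomm_coef (x * y)%g hx hy.
rewrite E1 -Exy !(inj_eq (mulgI _)) !(inj_eq (mulIg _)) eqxx nx ny.
rewrite Exy !(inj_eq (mulgI _)) !(inj_eq (mulIg _)) eq_sym nx eq_sym ny.
by case: eqP => _ H; rewrite -[RHS]H ?hsigmaM; ring.
Qed.

Lemma commute_star_mul : (x^* * y^* = x * y)%g.
Proof.
have := commute_coef_mul; case: eqP => // _.
by rewrite addr0 => h2; move: hchar; rewrite h2 eqxx.
Qed.

Lemma commute_double_one_add_sigma : 2%:R * (1 + sigma (x * y)%g) = 0.
Proof.
have := commute_coef_mul; rewrite commute_star_mul eqxx => H.
by rewrite -[RHS]H; ring.
Qed.

Lemma commute_star_l : (x^* * y = y * x^*)%g.
Proof.
apply: (mulIg y^*).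
have -> : (x^* * y * y^* = x * y * y)%g.
  by rewrite -mulgA -mul_starC // mulgA commute_star_mul.
by rewrite -[RHS]mulgA commute_star_mul mulgA -Exy.
Qed.

Lemma commute_mul_star : (x * y^* = x^* * y)%g.
Proof.
apply: (mulIg y^*).
rewrite -mulgA star_sqr // mulgA -[RHS]mulgA -mul_starC //.
by rewrite mulgA commute_star_mul.
Qed.

End Commuting.

Lemma commute_double_sigma_add x y :
    ~ Gstar star x -> ~ Gstar star y -> (x * y = y * x)%g ->
  2%:R * (sigma x + sigma y) = 0.
Proof.
move=> hx hy Exy; have := symm_anticomm_coef (x * y^*)%g hx hy.
rewrite -(commute_star_l hx hy Exy) -(commute_mul_star hx hy Exy).
rewrite (commute_star_l hy hx (esym Exy)) (commute_star_mul hx hy Exy).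
rewrite (commute_star_mul hy hx (esym Exy)) -Exy.
rewrite (inj_eq (mulgI _)) eq_sym (nonsym_eqF hy) eqxx => H.
by rewrite -[RHS]H; ring.
Qed.

Lemma commute_starE x y : (x * y = y * x)%g <-> (x^* * y = y * x^*)%g.
Proof.
case: (eqVneq x^* x) => [-> // | /eqP hx].
case: (eqVneq y^* y) => [sy | /eqP hy].
  by split=> /(congr1 star); rewrite !hstarM sy ?hstarK => ->.
have hx' : ~ Gstar star x^* by rewrite /Gstar hstarK => /esym.
split=> [|E]; first exact: commute_star_l.
by have := commute_star_l hx' hy E; rewrite hstarK.
Qed.

End Anticommutative.

Theorem lemma3p4 (R : comNzRingType) (G : groupType)
  (star : G -> G) (sigma : G -> R)
  (hchar : 2%:R != 0 :> R)
  (hstarM : forall x y : G, star (x * y)%g = (star y * star x)%g)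
  (hstarK : forall x : G, star (star x) = x)
  (hsigmaM : forall x y : G, sigma (x * y)%g = sigma x * sigma y)
  (hsigmaU : forall x : G, exists u : R, sigma x * u = 1)
  (hsigma_nt : exists x : G, sigma x != 1)
  (hcompat : forall x : G, sigma (x * star x)%g = 1)
  (hS : S_anticomm star sigma) :
  (forall x y : G, (x * y = y * x)%g <-> (star x * y = y * star x)%g) /\
  (forall x y : G, ~ Gstar star x -> ~ Gstar star y -> (x * y = y * x)%g ->
     ( (x * y = y * x)%g /\ (y * x = star x * star y)%g /\
         (star x * star y = star y * star x)%g /\
         (x * star y = star y * x)%g /\ (star y * x = star x * y)%g /\
         (star x * y = y * star x)%g /\
         2%:R * (1 + sigma (x * y)%g) = 0 /\
         2%:R * (sigma x + sigma y) = 0)).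
Proof.
split=> [x y | x y hx hy Exy].
  exact: (commute_starE hchar hstarM hstarK hsigmaM hsigmaU hS).
have xsys := commute_star_mul hchar hstarM hsigmaM hS hx hy Exy.
have ysxs := commute_star_mul hchar hstarM hsigmaM hS hy hx (esym Exy).
have ysx := commute_star_l hchar hstarM hsigmaM hsigmaU hS hy hx (esym Exy).
have xys := commute_mul_star hchar hstarM hsigmaM hsigmaU hS hx hy Exy.
split=> //; split; first by rewrite xsys.
split; first by rewrite xsys ysxs.
split; first by rewrite ysx.
split; first by rewrite ysx xys.
split; first exact: (commute_star_l hchar hstarM hsigmaM hsigmaU hS hx hy Exy).
split; first exact: (commute_double_one_add_sigma hchar hstarM hsigmaM hS hx hy Exy).
exact: (commute_double_sigma_add hchar hstarM hsigmaM hsigmaU hS hx hy Exy).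
Qed.
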